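(* Consider a stochastic non-zero-sum game $(\mathcal{P}^D)$ with a partially nested information structure and its policy-dependent static reduction $(\mathcal{P}^S)$. Then: (i) If a policy $\underline{\gamma}^{D,*}$ is a PL-NE (DM-NE, stationary) for $(\mathcal{P}^D)$, then the policy $\underline{\gamma}^{S,*}$ obtained from it via the policy-dependent static reduction relation is not necessarily a PL-NE (DM-NE, stationary) for $(\mathcal{P}^S)$. (ii) If a policy $\underline{\gamma}^{S,*}$ is a PL-NE (DM-NE, stationary) for $(\mathcal{P}^S)$, then a policy $\underline{\gamma}^{D,*}$ related to it through the policy-dependent static reduction relation is not necessarily a PL-NE (DM-NE, stationary) for $(\mathcal{P}^D)$. (iii) The statement of part (i) remains valid even if, for every fixed $u^D_{\downarrow(i,k)}$, the map $h_{i,k}(\zeta)\mapsto g_{i,k}(h_{i,k}(\zeta),u^D_{\downarrow(i,k)})$ is invertible for all realizations of $\zeta$ (for all $i,k$), each cost $c^i$ is continuously differentiable and jointly convex in all players' actions for every $\omega_0$, and $\underline{\gamma}^{D,*}$ satisfies Condition (C): for all $i\in\mathcal{N}$, $k\in\mathrm{TE}^i$, the composed map $\gamma^D_{i,k}\big(\{g_{j,l}(h_{j,l}(\zeta),u^{\downarrow(j,l)})\}_{(j,l)\in\downarrow(i,k)},\,g_{i,k}(h_{i,k}(\zeta),u^{\downarrow(i,k)})\big)$ is affine in $u^{\downarrow(i,k)}$.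
   Context: Setting: $N$ players, player $i$ consisting of one-shot decision makers DM$^k$, $k\in\mathrm{TE}^i$, acting sequentially; $\zeta=\{\omega_0,\omega_1,\dots,\omega_N\}$ collects all primitive random variables. In $(\mathcal{P}^D)$ (partially nested information structure), DM$^k$ of PL$^i$ observes $y^D_{i,k}=[\,y^D_{\downarrow(i,k)},\ \hat y^D_{i,k}=g_{i,k}(h_{i,k}(\zeta),u^D_{\downarrow(i,k)})\,]$, where $\downarrow(i,k)$ is the set of DMs $(j,l)$ whose actions affect $\hat y^D_{i,k}$ and $y^D_{\downarrow(i,k)}$ are their observations; $g_{i,k},h_{i,k}$ measurable. Costs $J^i(\underline{\gamma}^D)=E[c^i(\omega_0,\gamma^D_1(y^D_1),\dots,\gamma^D_N(y^D_N))]$ with Borel $c^i$. In the policy-dependent static reduction $(\mathcal{P}^S)$ (defined when the invertibility above holds), DMs observe $y^S_{i,k}=[\,y^S_{\downarrow(i,k)},\ \hat y^S_{i,k}=h_{i,k}(\zeta)\,]$ with the same costs, and policies are related by $\gamma^S_{i,k}(y^S_{i,k})=\gamma^D_{i,k}\big(y^D_{\downarrow(i,k)},g_{i,k}(h_{i,k}(\zeta),\gamma^D_{\downarrow(i,k)}(y^D_{\downarrow(i,k)}))\big)$ $P$-a.s. for all $i,k$. Only deterministic (pure) policies are considered. PL-NE: no player can lower its expected cost by unilaterally changing its whole policy; DM-NE: no single DM of a player can lower that player's cost by unilaterally changing its own policy; stationary: for each DM the gradient of the conditional expected cost of its player, given its observation, with respect to its action vanishes at the equilibrium action a.s. *)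

From mathcomp Require Import all_boot.
From Stdlib Require Import Reals.

Local Open Scope R_scope.

Definition fsum {T : finType} (f : T -> R) : R :=
  foldr (fun x acc => f x + acc) 0 (enum T).

(* DMs are indexed by 'I_nDM in the order in which they act; DM k belongs to
   player [owner k].  The primitive random variables zeta live on the finite
   probability space (Omega, prob); omega0 extracts omega_0 from zeta.
   hobs k = h_k(zeta),   gobs k y u = g_k(y, u)  (depends only on u_{down(k)}),
   down k j  <=>  j \in down(k). *)
Record game := Game {
  nPL : nat;
  nDM : nat;
  owner : 'I_nDM -> 'I_nPL;
  down : 'I_nDM -> 'I_nDM -> bool;
  Omega : finType;
  prob : Omega -> R;
  W0 : Type;
  omega0 : Omega -> W0;
  Obs : eqType;
  hobs : 'I_nDM -> Omega -> Obs;
  gobs : 'I_nDM -> Obs -> ('I_nDM -> R) -> Obs;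
  cost : 'I_nPL -> W0 -> ('I_nDM -> R) -> R
}.

Set Implicit Arguments.
Unset Strict Implicit.
Unset Printing Implicit Defensive.

Section Game.
Variable G : game.

Local Notation DM := ('I_(nDM G)).

(* DM k observes the "hat" observations of the DMs in down(k) and its own:
   y_k = [ y_{down(k)}, yhat_k ]  (with down transitively closed). *)
Definition infoset (k j : DM) : bool := down G k j || (j == k).

Definition partially_nested : Prop :=
  (forall w, 0 <= prob G w) /\
  fsum (prob G) = 1 /\
  (forall k j : DM, down G k j -> (j < k)%nat) /\
  (forall k j l : DM, down G k j -> down G j l -> down G k l) /\
  (forall (k : DM) y (u u' : DM -> R),
      (forall j, down G k j -> u j = u' j) -> gobs G k y u = gobs G k y u') /\
  (* invertibility of h_k(zeta) |-> g_k(h_k(zeta), u) for every fixed u,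
     for all realizations of zeta (needed for the static reduction) *)
  (forall (k : DM) (u : DM -> R) w w',
      gobs G k (hobs G k w) u = gobs G k (hobs G k w') u ->
      hobs G k w = hobs G k w').

Definition obs_eqb (k : DM) (y y' : DM -> Obs G) : bool :=
  [forall j, infoset k j ==> (y j == y' j)].

(* A policy profile; gamma k is the policy of DM k, applied to the full
   observation profile but required (admissibility) to depend only on y_k. *)
Definition policy := DM -> (DM -> Obs G) -> R.

Definition admissible (g : policy) : Prop :=
  forall k y y', obs_eqb k y y' -> g k y = g k y'.

(* Closed-loop outcome in (P^D): observations and actions are computed
   sequentially; 2*nDM+2 rounds of the joint update reach the fixed point. *)
Definition stepD (g : policy) (w : Omega G)
  (p : ((DM -> Obs G) * (DM -> R))%type) : ((DM -> Obs G) * (DM -> R))%type :=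
  (fun k => gobs G k (hobs G k w) p.2, fun k => g k p.1).

Definition outD (g : policy) (w : Omega G) : ((DM -> Obs G) * (DM -> R))%type :=
  iter (2 * nDM G + 2)%nat (stepD g w) (fun k => hobs G k w, fun _ => 0).

Record problem := Problem {
  pobs : policy -> Omega G -> DM -> Obs G;
  pact : policy -> Omega G -> DM -> R
}.

Definition PD : problem :=
  Problem (fun g w => (outD g w).1) (fun g w => (outD g w).2).

(* policy-dependent static reduction (P^S): y^S_k = [y^S_{down k}, h_k(zeta)] *)
Definition PS : problem :=
  Problem (fun _ w => fun l => hobs G l w) (fun g w => fun k => g k (fun l => hobs G l w)).

Definition Jcost (P : problem) (i : 'I_(nPL G)) (g : policy) : R :=
  fsum (fun w => prob G w * cost G i (omega0 G w) (pact P g w)).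

Definition PL_NE (P : problem) (g : policy) : Prop :=
  admissible g /\
  forall (i : 'I_(nPL G)) (g' : policy), admissible g' ->
    (forall k, owner G k <> i -> g' k = g k) ->
    Jcost P i g <= Jcost P i g'.

Definition DM_NE (P : problem) (g : policy) : Prop :=
  admissible g /\
  forall (k : DM) (g' : policy), admissible g' ->
    (forall k', k' <> k -> g' k' = g k') ->
    Jcost P (owner G k) g <= Jcost P (owner G k) g'.

Definition setpol (g : policy) (k : DM) (a : R) : policy :=
  fun k' => if k' == k then (fun _ => a) else g k'.

Definition condcost (P : problem) (g : policy) (k : DM) (w : Omega G) (a : R) : R :=
  fsum (fun w' => if obs_eqb k (pobs P g w') (pobs P g w)
                  then prob G w' * cost G (owner G k) (omega0 G w') (pact P (setpol g k a) w')
                  else 0)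
  / fsum (fun w' => if obs_eqb k (pobs P g w') (pobs P g w) then prob G w' else 0).

Definition stationary (P : problem) (g : policy) : Prop :=
  admissible g /\
  forall (k : DM) (w : Omega G), 0 < prob G w ->
    derivable_pt_lim (condcost P g k w) (pact P g w k) 0.

Definition static_rel (gD gS : policy) : Prop :=
  forall (k : DM) (w : Omega G), 0 < prob G w ->
    gS k (fun l => hobs G l w) = gD k (pobs PD gD w).

Definition affine (F : (DM -> R) -> R) : Prop :=
  exists (a : DM -> R) (b : R), forall u, F u = b + fsum (fun j => a j * u j).

Definition condC (gD : policy) : Prop :=
  forall (k : DM) (w : Omega G),
    affine (fun u => gD k (fun l => gobs G l (hobs G l w) u)).

End Game.

Definition upd (n : nat) (u : 'I_n -> R) (j : 'I_n) (t : R) : 'I_n -> R :=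
  fun l => if l == j then t else u l.

Definition cont_fun (n : nat) (F : ('I_n -> R) -> R) : Prop :=
  forall u eps, 0 < eps -> exists delta, 0 < delta /\
    forall v, (forall j, Rabs (v j - u j) < delta) -> Rabs (F v - F u) < eps.

Definition cont_diff (n : nat) (f : ('I_n -> R) -> R) : Prop :=
  exists D : 'I_n -> ('I_n -> R) -> R,
    (forall j u, derivable_pt_lim (fun t => f (upd u j t)) (u j) (D j u)) /\
    (forall j, cont_fun (D j)).

Definition jointly_convex (n : nat) (f : ('I_n -> R) -> R) : Prop :=
  forall u v t, 0 <= t <= 1 ->
    f (fun l => t * u l + (1 - t) * v l) <= t * f u + (1 - t) * f v.

Inductive eq_notion := PLNE | DMNE | Stationary.

Definition is_eq (nt : eq_notion) (G : game) (P : problem G) (g : policy G) : Prop :=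
  match nt with
  | PLNE => PL_NE P g
  | DMNE => DM_NE P g
  | Stationary => stationary P g
  end.

(* A two-player leader-follower game on a one-point probability
   space refutes all three claims.  The leader acts first, with cost
   (u0 - 1)^2 + u1^2; the follower, with cost (u1 - u0)^2, observes u0 in P^D
   but only the constant primitive observation 0 in P^S.  In P^D the follower
   best responds by copying u0, so the leader faces (u0 - 1)^2 + u0^2 and plays
   1/2; the static reduction freezes the follower's action at the constant 1/2,
   against which the leader would rather play 1.  Conversely, both playing 1
   is an equilibrium of P^S, but in its dynamic counterpart the follower copies
   and the leader gains by moving to 1/2.  Each failure is a profitable
   deviation of the leader at a point where its conditional cost has nonzero
   derivative, so PL-NE, DM-NE and stationarity fail together.  The copying
   policy is affine and both costs are convex quadratics, which gives (iii). *)

From mathcomp Require Import all_boot.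
From mathcomp Require Import Rstruct.
From Stdlib Require Import Reals Lra FunctionalExtensionality.
From Coquelicot Require Import Coquelicot.
Set Implicit Arguments.
Unset Strict Implicit.
Local Open Scope R_scope.

Lemma fsum_unit (f : unit -> R) : fsum f = f tt.
Proof. by rewrite /fsum enumT unlock /= Rplus_0_r. Qed.

Lemma fsum_ord2 (f : 'I_2 -> R) : fsum f = f ord0 + f ord_max.
Proof.
rewrite /fsum (_ : enum 'I_2 = [:: ord0; ord_max]) /= ?Rplus_0_r //.
by apply: (inj_map val_inj); rewrite val_enum_ord.
Qed.

Lemma sqr_convex p q t :
  0 <= t <= 1 -> (t * p + (1 - t) * q) ^ 2 <= t * p ^ 2 + (1 - t) * q ^ 2.
Proof.
move=> t01; have := Rmult_le_pos (t * (1 - t)) ((p - q) ^ 2).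
have := pow2_ge_0 (p - q); nra.
Qed.

Section Equilibria.
Variable G : game.
Implicit Types (P : problem G) (g : policy G).

Lemma setpol_admissible g k a : admissible g -> admissible (setpol g k a).
Proof. by move=> gA k' y y' yy'; rewrite /setpol; case: (k' == k) => //; apply: gA. Qed.

Lemma PL_NE_DM_NE P g : PL_NE P g -> DM_NE P g.
Proof.
move=> [gA gNE]; split=> // k g' g'A g'E.
by apply: gNE => // k' k'k; apply: g'E => k'E; apply: k'k; rewrite k'E.
Qed.

Lemma DM_NE_PL_NE P g : injective (owner G) -> DM_NE P g -> PL_NE P g.
Proof.
move=> ownerI [gA gNE]; split=> // i g' g'A g'E.
case: (pickP (fun k => owner G k == i)) => [k /eqP ki | noi].
  rewrite -ki; apply: gNE => // k' k'k; apply: g'E => k'i.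
  by apply: k'k; apply: ownerI; rewrite k'i.
suff -> : g' = g by apply: Rle_refl.
apply: functional_extensionality => k; apply: g'E => ki.
by move: (noi k); rewrite ki eqxx.
Qed.

Lemma DM_NE_le_setpol P g k a :
  DM_NE P g -> Jcost P (owner G k) g <= Jcost P (owner G k) (setpol g k a).
Proof.
move=> [gA gNE]; apply: gNE; first exact: setpol_admissible.
by move=> k' /eqP k'k; rewrite /setpol (negbTE k'k).
Qed.

Lemma derive_neq0_not_stationary P g k w x l :
  0 < prob G w -> pact P g w k = x ->
  derivable_pt_lim (condcost P g k w) x l -> l <> 0 -> ~ stationary P g.
Proof.
move=> w_pos <- dl l_neq0 [_ gS]; apply: l_neq0.
exact: uniqueness_limite dl (gS k w w_pos).
Qed.

Lemma is_eq_DM_NE_stationary nt P g :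
  injective (owner G) -> DM_NE P g -> stationary P g -> is_eq nt P g.
Proof. by move=> ownerI gNE gS; case: nt => //=; apply: DM_NE_PL_NE. Qed.

Lemma not_is_eq_DM_NE_stationary nt P g :
  ~ DM_NE P g -> ~ stationary P g -> ~ is_eq nt P g.
Proof. by move=> gNE gS; case: nt => //= /PL_NE_DM_NE. Qed.

End Equilibria.

Definition leader : 'I_2 := ord0.
Definition follower : 'I_2 := ord_max.

Lemma ord2P (j : 'I_2) : j = leader \/ j = follower.
Proof. by case: j => [[|[|//]] ?]; [left | right]; apply: val_inj. Qed.

Lemma follower_neq_leader : follower <> leader.
Proof. by move/eqP. Qed.

Definition leader_cost (a b : R) : R := (a - 1) ^ 2 + b ^ 2.
Definition follower_cost (a b : R) : R := (b - a) ^ 2.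

Lemma leader_cost_diag_min a : leader_cost (/2) (/2) <= leader_cost a a.
Proof. rewrite /leader_cost; have := pow2_ge_0 (a - /2); nra. Qed.

Lemma follower_cost_min a b : follower_cost a a <= follower_cost a b.
Proof. rewrite /follower_cost; have := pow2_ge_0 (b - a); nra. Qed.

Lemma leader_cost_min b a : leader_cost 1 b <= leader_cost a b.
Proof. rewrite /leader_cost; have := pow2_ge_0 (a - 1); nra. Qed.

Lemma leader_cost_diag_derive a :
  derivable_pt_lim (fun x => leader_cost x x) a (4 * a - 2).
Proof. apply/is_derive_Reals; rewrite /leader_cost; auto_derive => //; ring. Qed.

Lemma leader_cost_derive b a :
  derivable_pt_lim (fun x => leader_cost x b) a (2 * (a - 1)).
Proof. apply/is_derive_Reals; rewrite /leader_cost; auto_derive => //; ring. Qed.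

Lemma follower_cost_derive a b :
  derivable_pt_lim (follower_cost a) b (2 * (b - a)).
Proof. apply/is_derive_Reals; rewrite /follower_cost; auto_derive => //; ring. Qed.

Definition lf_cost (i : 'I_2) (_ : unit) (u : 'I_2 -> R) : R :=
  if i == leader then leader_cost (u leader) (u follower)
  else follower_cost (u leader) (u follower).

Definition lf_game : game := {|
  nPL := 2; nDM := 2; owner k := k;
  down k j := (k == follower) && (j == leader);
  Omega := unit; prob _ := 1; W0 := unit; omega0 _ := tt;
  Obs := R; hobs _ _ := 0;
  gobs k y u := if k == follower then u leader else y;
  cost := lf_cost |}.

Lemma lf_owner_injective : injective (owner lf_game).
Proof. by []. Qed.

Definition obs0 : 'I_2 -> R := fun _ => 0.
Definition seen (a : R) : 'I_2 -> R := fun l => if l == follower then a else 0.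
Definition play (a b : R) : 'I_2 -> R := fun k => if k == leader then a else b.

Definition copy_policy (c : R) : policy lf_game :=
  fun k y => if k == leader then c else y follower.
Definition const_policy (c : R) : policy lf_game := fun _ _ => c.

Lemma lf_partially_nested : partially_nested lf_game.
Proof.
split; first by move=> _ /=; lra.
split; first by rewrite fsum_unit.
split; first by move=> k j /andP [/eqP -> /eqP ->].
split; first by move=> k j l /andP [_ /eqP ->] /andP [].
split; last by [].
by move=> k y u u' uu' /=; case kf: (k == follower) => //; apply: uu'; rewrite /= kf.
Qed.

Lemma admissible_leader (g : policy lf_game) y y' :
  admissible g -> y leader = y' leader -> g leader y = g leader y'.
Proof.
move=> gA yy'; apply: gA; apply/forallP => j; apply/implyP.
by rewrite /infoset /=; case: (ord2P j) => ->; rewrite ?yy' ?eqxx.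
Qed.

Lemma copy_policy_admissible c : admissible (copy_policy c).
Proof.
move=> k y y' /forallP /(_ follower) /implyP; rewrite /copy_policy.
by case: (ord2P k) => -> //; rewrite /infoset eqxx orbT => /(_ isT) /eqP.
Qed.

Lemma const_policy_admissible c : admissible (const_policy c).
Proof. by []. Qed.

Section Outcomes.
Variable g : policy lf_game.
Hypothesis gA : admissible g.
Let a := g leader obs0.

Lemma iter3_stepD x :
  x.1 leader = 0 -> iter 3 (stepD g tt) x = (seen a, play a (g follower (seen a))).
Proof.
move=> x0; rewrite /stepD /=.
have lead y : y leader = 0 -> g leader y = a by move=> y0; apply: admissible_leader.
rewrite (lead x.1 x0) lead //; congr pair.
by apply: functional_extensionality => k; case: (ord2P k) => ->; rewrite /play ?lead.
Qed.

Lemma outD_lf : outD g tt = (seen a, play a (g follower (seen a))).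
Proof. by rewrite /outD (iterD 3 3) !iter3_stepD. Qed.

Lemma pobs_PD : pobs (PD lf_game) g tt = seen a.
Proof. by rewrite -[LHS]/((outD g tt).1) outD_lf. Qed.

Lemma pact_PD : pact (PD lf_game) g tt = play a (g follower (seen a)).
Proof. by rewrite -[LHS]/((outD g tt).2) outD_lf. Qed.

End Outcomes.

Lemma Jcost_lf (P : problem lf_game) i g : Jcost P i g = lf_cost i tt (pact P g tt).
Proof. by rewrite /Jcost fsum_unit /= Rmult_1_l. Qed.

Lemma condcost_lf (P : problem lf_game) g k :
  condcost P g k tt = fun a => lf_cost k tt (pact P (setpol g k a) tt).
Proof.
apply: functional_extensionality => a.
rewrite /condcost !fsum_unit (_ : obs_eqb _ _ _); last by apply/forallP => j; apply/implyP.
by rewrite /= Rmult_1_l /Rdiv Rinv_1 Rmult_1_r.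
Qed.

Lemma Jcost_PD i g : admissible g ->
  Jcost (PD lf_game) i g =
  lf_cost i tt (play (g leader obs0) (g follower (seen (g leader obs0)))).
Proof. by move=> gA; rewrite Jcost_lf pact_PD. Qed.

Lemma Jcost_PS i g :
  Jcost (PS lf_game) i g = lf_cost i tt (play (g leader obs0) (g follower obs0)).
Proof. by rewrite Jcost_lf. Qed.

Lemma condcost_PD_copy_leader c :
  condcost (PD lf_game) (copy_policy c) leader tt = fun a => leader_cost a a.
Proof.
rewrite condcost_lf; apply: functional_extensionality => a.
by rewrite pact_PD; last exact/setpol_admissible/copy_policy_admissible.
Qed.

Lemma condcost_PD_copy_follower c :
  condcost (PD lf_game) (copy_policy c) follower tt = follower_cost c.
Proof.
rewrite condcost_lf; apply: functional_extensionality => b.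
by rewrite pact_PD; last exact/setpol_admissible/copy_policy_admissible.
Qed.

Lemma condcost_PS_leader g :
  condcost (PS lf_game) g leader tt = fun a => leader_cost a (g follower obs0).
Proof. by rewrite condcost_lf. Qed.

Lemma condcost_PS_follower g :
  condcost (PS lf_game) g follower tt = follower_cost (g leader obs0).
Proof. by rewrite condcost_lf. Qed.

Lemma copy_half_PD_DM_NE : DM_NE (PD lf_game) (copy_policy (/2)).
Proof.
split=> [|k g' g'A g'E]; first exact: copy_policy_admissible.
rewrite !Jcost_PD //; last exact: copy_policy_admissible.
case: (ord2P k) g'E => -> g'E.
- rewrite (g'E follower); last exact: follower_neq_leader.
  exact: leader_cost_diag_min.
- rewrite (g'E leader); last by move/esym/follower_neq_leader.
  exact: follower_cost_min.
Qed.

Lemma copy_half_PD_stationary : stationary (PD lf_game) (copy_policy (/2)).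
Proof.
split=> [|k [] _]; first exact: copy_policy_admissible.
rewrite pact_PD; last exact: copy_policy_admissible.
case: (ord2P k) => ->.
- rewrite condcost_PD_copy_leader.
  have := leader_cost_diag_derive (/2); rewrite (_ : 4 * /2 - 2 = 0) //; lra.
- rewrite condcost_PD_copy_follower.
  have := follower_cost_derive (/2) (/2); rewrite (_ : 2 * (/2 - /2) = 0) //; lra.
Qed.

Lemma static_rel_copy c : static_rel (copy_policy c) (const_policy c).
Proof.
move=> k [] _; rewrite pobs_PD; last exact: copy_policy_admissible.
by case: (ord2P k) => ->.
Qed.

Lemma static_rel_copy_values c gS :
  static_rel (copy_policy c) gS -> gS leader obs0 = c /\ gS follower obs0 = c.
Proof.
move=> rel; split; first exact: (rel leader tt Rlt_0_1).
rewrite (rel follower tt Rlt_0_1) pobs_PD //; exact: copy_policy_admissible.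
Qed.

Section RelatedToCopyHalf.
Variable gS : policy lf_game.
Hypothesis rel : static_rel (copy_policy (/2)) gS.

Lemma related_PS_not_DM_NE : ~ DM_NE (PS lf_game) gS.
Proof.
have [lead foll] := static_rel_copy_values rel.
move=> gNE; have := DM_NE_le_setpol (G := lf_game) leader 1 gNE.
rewrite !Jcost_PS.
change (leader_cost (gS leader obs0) (gS follower obs0) <=
        leader_cost 1 (gS follower obs0) -> False).
rewrite lead foll /leader_cost; lra.
Qed.

Lemma related_PS_not_stationary : ~ stationary (PS lf_game) gS.
Proof.
have [lead foll] := static_rel_copy_values rel.
apply: (derive_neq0_not_stationary (P := PS lf_game) (k := leader) (w := tt) Rlt_0_1 lead).
  rewrite condcost_PS_leader foll; exact: leader_cost_derive.
lra.
Qed.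

End RelatedToCopyHalf.

Lemma const_one_PS_DM_NE : DM_NE (PS lf_game) (const_policy 1).
Proof.
split=> [|k g' g'A g'E]; first exact: const_policy_admissible.
rewrite !Jcost_PS; case: (ord2P k) g'E => -> g'E.
- rewrite (g'E follower); last exact: follower_neq_leader.
  exact: leader_cost_min.
- rewrite (g'E leader); last by move/esym/follower_neq_leader.
  exact: follower_cost_min.
Qed.

Lemma const_one_PS_stationary : stationary (PS lf_game) (const_policy 1).
Proof.
split=> [|k [] _]; first exact: const_policy_admissible.
case: (ord2P k) => ->.
- rewrite condcost_PS_leader.
  have := leader_cost_derive 1 1; rewrite (_ : 2 * (1 - 1) = 0) //; lra.
- rewrite condcost_PS_follower.
  have := follower_cost_derive 1 1; rewrite (_ : 2 * (1 - 1) = 0) //; lra.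
Qed.

Lemma copy_one_PD_not_DM_NE : ~ DM_NE (PD lf_game) (copy_policy 1).
Proof.
move=> gNE; have := DM_NE_le_setpol (G := lf_game) leader (/2) gNE.
have gA := copy_policy_admissible 1.
rewrite !Jcost_PD //; last exact: setpol_admissible.
change (leader_cost 1 1 <= leader_cost (/2) (/2) -> False).
rewrite /leader_cost; lra.
Qed.

Lemma copy_one_PD_not_stationary : ~ stationary (PD lf_game) (copy_policy 1).
Proof.
apply: (derive_neq0_not_stationary (P := PD lf_game) (k := leader) (w := tt) (x := 1) Rlt_0_1).
- by rewrite pact_PD //; exact: copy_policy_admissible.
- rewrite condcost_PD_copy_leader; exact: leader_cost_diag_derive.
- lra.
Qed.

Definition lf_cost_grad (i j : 'I_2) (u : 'I_2 -> R) : R :=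
  if i == leader then
    if j == leader then 2 * (u leader - 1) else 2 * u follower
  else
    if j == leader then 2 * (u leader - u follower) else 2 * (u follower - u leader).

Lemma lf_cost_partial i j w0 u :
  derivable_pt_lim (fun t => lf_cost i w0 (upd u j t)) (u j) (lf_cost_grad i j u).
Proof.
apply/is_derive_Reals.
case: (ord2P i) => ->; case: (ord2P j) => ->;
  rewrite /lf_cost /lf_cost_grad /upd /leader_cost /follower_cost /=;
  by auto_derive => //; ring.
Qed.

Lemma lf_cost_grad_continuous i j : cont_fun (lf_cost_grad i j).
Proof.
move=> u eps eps_pos; exists (eps / 4); split=> [|v uv]; first lra.
have [+ +] := Rabs_def2 _ _ (uv leader); have [+ +] := Rabs_def2 _ _ (uv follower).
move=> ? ? ? ?; apply: Rabs_def1;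
  case: (ord2P i) => ->; case: (ord2P j) => ->; rewrite /lf_cost_grad /=; lra.
Qed.

Lemma lf_cost_cont_diff i w0 : cont_diff (lf_cost i w0).
Proof.
exists (lf_cost_grad i); split=> [j u|]; [exact: lf_cost_partial | exact: lf_cost_grad_continuous].
Qed.

Lemma lf_cost_convex i w0 : jointly_convex (lf_cost i w0).
Proof.
move=> u v t t01; rewrite /lf_cost.
case: (ord2P i) => -> /=; rewrite /leader_cost /follower_cost.
- have := sqr_convex (u leader - 1) (v leader - 1) t01.
  have := sqr_convex (u follower) (v follower) t01.
  by rewrite (_ : t * u leader + (1 - t) * v leader - 1 =
                  t * (u leader - 1) + (1 - t) * (v leader - 1)); [lra | ring].
- have := sqr_convex (u follower - u leader) (v follower - v leader) t01.
  by rewrite (_ : t * u follower + (1 - t) * v follower - (t * u leader + (1 - t) * v leader) =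
                  t * (u follower - u leader) + (1 - t) * (v follower - v leader)); [lra | ring].
Qed.

Lemma copy_half_condC : condC (copy_policy (/2)).
Proof.
move=> k w; rewrite /copy_policy; case: (ord2P k) => ->.
- by exists (fun _ => 0), (/2) => u; rewrite fsum_ord2 /=; lra.
- exists (fun j => if j == leader then 1 else 0), 0 => u.
  by rewrite fsum_ord2 /= -/leader; ring.
Qed.

Theorem proposition3p1 :
  forall nt : eq_notion,
  (* (i) *)
  (exists (G : game) (gD : policy G),
      partially_nested G /\ is_eq nt (PD G) gD /\
      (exists gS : policy G, admissible gS /\ static_rel gD gS) /\
      (forall gS : policy G, admissible gS -> static_rel gD gS ->
         ~ is_eq nt (PS G) gS)) /\
  (* (ii) *)
  (exists (G : game) (gS : policy G),
      partially_nested G /\ is_eq nt (PS G) gS /\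
      exists gD : policy G,
        admissible gD /\ static_rel gD gS /\ ~ is_eq nt (PD G) gD) /\
  (* (iii) *)
  (exists (G : game) (gD : policy G),
      partially_nested G /\
      (forall i w0, cont_diff (cost G i w0) /\ jointly_convex (cost G i w0)) /\
      condC gD /\
      is_eq nt (PD G) gD /\
      (exists gS : policy G, admissible gS /\ static_rel gD gS) /\
      (forall gS : policy G, admissible gS -> static_rel gD gS ->
         ~ is_eq nt (PS G) gS)).
Proof.
move=> nt; have pn := lf_partially_nested.
have copy_half_PD : is_eq nt (PD lf_game) (copy_policy (/2)).
  exact: is_eq_DM_NE_stationary lf_owner_injective
           copy_half_PD_DM_NE copy_half_PD_stationary.
have related_PS gS : admissible gS -> static_rel (copy_policy (/2)) gS ->
    ~ is_eq nt (PS lf_game) gS.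
  move=> _ rel; exact: not_is_eq_DM_NE_stationary
                         (related_PS_not_DM_NE rel) (related_PS_not_stationary rel).
have related_const_half : exists gS : policy lf_game,
    admissible gS /\ static_rel (copy_policy (/2)) gS.
  exists (const_policy (/2)); split; [exact: const_policy_admissible | exact: static_rel_copy].
split; [|split].
- by exists lf_game, (copy_policy (/2)); do 3 split=> //.
- exists lf_game, (const_policy 1); split=> //; split.
    exact: is_eq_DM_NE_stationary lf_owner_injective
             const_one_PS_DM_NE const_one_PS_stationary.
  exists (copy_policy 1); split; first exact: copy_policy_admissible.
  split; first exact: static_rel_copy.
  exact: not_is_eq_DM_NE_stationary copy_one_PD_not_DM_NE copy_one_PD_not_stationary.
- exists lf_game, (copy_policy (/2)); split=> //; split.
    by move=> i w0; split; [exact: lf_cost_cont_diff | exact: lf_cost_convex].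
  split; first exact: copy_half_condC.
  by do 3 split=> //.
Qed.
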